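(* Let $r\ge2$ and $m\ge1$ be integers. Then (i) $P\left(-\frac{r-1}{r},-\frac{r-2}{r},\ldots,-\frac{r-m}{r}\right)\,S_m\!\left(r-\frac{t\varphi'(t)}{\varphi(t)}\right)\,Q\left(\frac{r-1}{r},\frac{r-2}{r},\ldots,\frac{r-m}{r}\right)=r\,\mathrm{I}_m$; (ii) $P\left(-\frac{r-1}{r},\ldots,-\frac{r-m}{r}\right)\,\mathrm{diag}(r-1,r-2,\ldots,r-m)\,Q\left(\frac{r-1}{r},\ldots,\frac{r-m}{r}\right)=\mathrm{diag}(r-1,r-2,\ldots,r-m)$.
   Context: $s_1,\dots,s_r$ are independent indeterminates over $\mathbb{Q}$ and $\varphi(t)=1+s_1t+\cdots+s_rt^r$. For $\lambda\in\mathbb{C}$ and $\ell\in\mathbb{Z}$, $\beta_\ell(\lambda)$ is the coefficient of $t^\ell$ in the power series $\varphi(t)^\lambda$ (so $\beta_0(\lambda)=1$, $\beta_\ell(\lambda)=0$ for $\ell<0$). For $\lambda_1,\dots,\lambda_m\in\mathbb{C}$, $P(\lambda_1,\ldots,\lambda_m)$ is the $m\times m$ matrix with $(i,j)$ entry $\beta_{i-j}(\lambda_i)$; for $\mu_1,\dots,\mu_m$, $Q(\mu_1,\ldots,\mu_m)$ is the $m\times m$ matrix with $(i,j)$ entry $\beta_{i-j}(\mu_j)$. For a power series $\psi(t)=a_0+a_1t+\cdots$, $S_m(\psi(t))$ is the $m\times m$ matrix with $(i,j)$ entry $a_{i-j}$ (with $a_i=0$ for $i<0$). $\mathrm{I}_m$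 is the identity matrix. *)

From mathcomp Require Import all_boot all_algebra.
From mathcomp Require Import mpoly.
Set Implicit Arguments. Unset Strict Implicit. Unset Printing Implicit Defensive.
Import GRing.Theory.
Local Open Scope ring_scope.

(* Ring of coefficients: Q[s_1,...,s_r] = {mpoly rat[r]}, with s_(i+1) = 'X_i. *)

Definition gbinom (l : rat) (k : nat) : rat :=
  (\prod_(i < k) (l - i%:R)) / (k`!)%:R.

Definition phi (r : nat) : {poly {mpoly rat[r]}} :=
  1 + \sum_(i < r) ('X_i)%:P * 'X^(i.+1).

(* beta_l(lambda) = [t^l] phi(t)^lambda, where for a series with constant term 1,
   phi^lambda = sum_k binom(lambda,k) (phi - 1)^k (only k <= l contribute to t^l);
   beta_l = 0 for l < 0. *)
Definition beta (r : nat) (lam : rat) (l : int) : {mpoly rat[r]} :=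
  match l with
  | Posz n => (\sum_(k < n.+1) (gbinom lam k)%:MP *: (phi r - 1) ^+ k)`_n
  | Negz _ => 0
  end.

(* coefficients of the power series  r - t phi'(t)/phi(t),
   using 1/phi = phi^(-1) with coefficients beta_k(-1) *)
Definition psi_coef (r : nat) (n : nat) : {mpoly rat[r]} :=
  (r%:R *+ (n == 0)%N)
  - \sum_(j < n.+1) ('X * (phi r)^`())`_j * beta r (-1) (n - j)%N.

Definition Smat (r m : nat) (a : nat -> {mpoly rat[r]}) : 'M[{mpoly rat[r]}]_m :=
  \matrix_(i < m, j < m) (if (j <= i)%N then a (i - j)%N else 0).

Definition Pmat (r m : nat) (lam : 'I_m -> rat) : 'M[{mpoly rat[r]}]_m :=
  \matrix_(i < m, j < m) beta r (lam i) (i%:Z - j%:Z).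

Definition Qmat (r m : nat) (mu : 'I_m -> rat) : 'M[{mpoly rat[r]}]_m :=
  \matrix_(i < m, j < m) beta r (mu j) (i%:Z - j%:Z).

(* Write φ^c for the binomial series Σ_k binom(c,k) (φ - 1)^k, whose coefficients are
   the β_ℓ(c). Row i of P(-μ) and column k of Q(μ) are then those of the lower triangular
   Toeplitz matrices of φ^(-μ_i) and φ^(μ_k), and products of such matrices multiply the
   series. For μ_k = (e - k)/r the (i,k) entry of (i) is thus [t^n] φ^(n/r) ψ with
   n = i - k and ψ = r - tφ'/φ, and the Euler relation t (φ^c)' = c t φ' φ^(c-1), read at
   t^n with c = n/r, gives [t^n] φ^(n/r) ψ = r δ_(n,0). In (ii), multiplying by
   diag(e - j) turns column k of Q(μ) into that of r μ_k φ^(μ_k) - t (φ^(μ_k))', which is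
   μ_k φ^(μ_k) ψ, so (ii) reduces to the same identity. Power series are handled as
   polynomials modulo t^N. *)

From mathcomp Require Import all_boot all_algebra.
From mathcomp Require Import mpoly ring zify.
Set Implicit Arguments. Unset Strict Implicit. Unset Printing Implicit Defensive.
Import GRing.Theory Num.Theory.
Local Open Scope ring_scope.

Notation "p = q %[modX N ]" := (take_poly N p = take_poly N q)
  (at level 70, q at next level, format "p  =  q  %[modX  N ]") : ring_scope.

Lemma coefX_deriv (R : nzRingType) (p : {poly R}) n : ('X * p^`())`_n = p`_n *+ n.
Proof. by case: n => [|n]; rewrite coefXM ?coef_deriv. Qed.

Section Truncation.
Variable R : comNzRingType.
Implicit Types (p q u : {poly R}) (N : nat).

Lemma take_polyMr N p q : p * take_poly N q = p * q %[modX N].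
Proof.
by rewrite -[in RHS](poly_take_drop N q) mulrDr mulrA take_polyD take_polyMXn_0 addr0.
Qed.

Lemma take_polyMl N p q : take_poly N p * q = p * q %[modX N].
Proof. by rewrite ![_ * q]mulrC take_polyMr. Qed.

Lemma eqmodX_mul N p p' q q' :
  p = p' %[modX N] -> q = q' %[modX N] -> p * q = p' * q' %[modX N].
Proof.
by move=> ep eq; rewrite -take_polyMl ep take_polyMl -take_polyMr eq take_polyMr.
Qed.

Lemma coef_eqmodX N p q n : p = q %[modX N] -> (n < N)%N -> p`_n = q`_n.
Proof. by move=> /(congr1 (coefp n)) /= + lt_nN; rewrite !coef_take_poly lt_nN. Qed.

Lemma take_polyXM N p : take_poly N.+1 ('X * p) = 'X * take_poly N p.
Proof. by rewrite mulrC -['X]expr1 take_polyMXn subn1 mulrC. Qed.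

Lemma take_poly_comp N p u : u`_0 = 0 -> take_poly N p \Po u = p \Po u %[modX N].
Proof.
move=> u0; have uX : u = drop_poly 1 u * 'X.
  rewrite -{1}(poly_take_drop 1 u) expr1 [take_poly 1 u](_ : _ = 0) ?add0r //.
  by apply/polyP => -[|i]; rewrite coef_take_poly coef0.
rewrite -[in RHS](poly_take_drop N p) comp_polyD comp_polyM rmorphXn /= comp_polyX.
by rewrite uX exprMn mulrA take_polyD take_polyMXn_0 addr0.
Qed.

End Truncation.

Lemma gbinom0 c : gbinom c 0 = 1.
Proof. by rewrite /gbinom big_ord0 fact0 divr1. Qed.

Lemma mul_gbinom_left c k : gbinom c k.+1 * k.+1%:R = gbinom c k * (c - k%:R).
Proof.
rewrite /gbinom big_ord_recr factS natrM /=.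
have fact_neq0 : (k`!%:R : rat) != 0 by rewrite pnatr_eq0 -lt0n fact_gt0.
by field; rewrite fact_neq0 addrC natr1 pnatr_eq0.
Qed.

Lemma mul_gbinom_diag c k : gbinom c k.+1 * k.+1%:R = c * gbinom (c - 1) k.
Proof.
rewrite /gbinom big_ord_recl factS natrM /=.
under eq_bigr => i _ do rewrite /bump /= add1n -natr1 opprD addrA addrAC.
have fact_neq0 : (k`!%:R : rat) != 0 by rewrite pnatr_eq0 -lt0n fact_gt0.
by field; rewrite fact_neq0 addrC natr1 pnatr_eq0.
Qed.

Lemma gbinom_Vandermonde a b k :
  \sum_(i < k.+1) gbinom a i * gbinom b (k - i) = gbinom (a + b) k.
Proof.
elim: k => [|k IHk]; first by rewrite big_ord1 !gbinom0 mulr1.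
apply: (mulIf (_ : k.+1%:R != 0 :> rat)); first by rewrite pnatr_eq0.
have split_k1 i : (i <= k.+1)%N -> k.+1%:R = i%:R + (k.+1 - i)%:R :> rat.
  by move=> le_ik; rewrite -natrD subnKC.
rewrite mul_gbinom_left -IHk !mulr_suml.
under eq_bigr => i _ do rewrite (split_k1 i) ?mulrDr ?leq_ord //.
rewrite big_split /= big_ord_recl [X in _ + X]big_ord_recr /= mulr0 add0r.
rewrite subnn mulr0 addr0 -big_split; apply: eq_bigr => i _ /=.
have le_ik : (i <= k)%N by rewrite -ltnS.
rewrite /bump /= add1n subSS (subSn le_ik).
rewrite mulrAC mul_gbinom_left -[_ * _ * (k - i).+1%:R]mulrA mul_gbinom_left.
rewrite natrB //; ring.
Qed.

Section BinomialSeries.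
Variables (R : comAlgType rat) (u : {poly R}).
Hypothesis u0 : u`_0 = 0.
Implicit Types (a b c : rat) (N : nat).

Definition binpoly N c : {poly R} := \poly_(k < N) (gbinom c k)%:A.

(* [binser N c] represents (1 + u)^c modulo t^N. *)
Definition binser N c := binpoly N c \Po u.

Lemma binserE N c : binser N c = \sum_(k < N) (gbinom c k)%:A *: u ^+ k.
Proof.
rewrite /binser /binpoly poly_def linear_sum; apply: eq_bigr => k _ /=.
by rewrite comp_polyZ rmorphXn /= comp_polyX.
Qed.

Lemma take_binser n N c : (n <= N)%N -> binser N c = binser n c %[modX n].
Proof.
move=> le_nN; rewrite -take_poly_comp // -[RHS]take_poly_comp //.
congr (take_poly _ (_ \Po _)).
by apply/polyP => j; rewrite !coef_take_poly !coef_poly; case: ltnP => // /leq_trans->.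
Qed.

Lemma coef_binser N c j : (j < N)%N ->
  (binser N c)`_j = (\sum_(k < j.+1) (gbinom c k)%:A *: u ^+ k)`_j.
Proof.
move=> lt_jN; rewrite -binserE.
by have /(congr1 (coefp j)) := take_binser c lt_jN; rewrite /= !coef_take_poly ltnSn.
Qed.

Lemma coef0_binser N c : (0 < N)%N -> (binser N c)`_0 = 1.
Proof. by move=> N_gt0; rewrite coef_binser // big_ord1 gbinom0 expr0 !scale1r coef1. Qed.

Lemma binserM N a b : binser N a * binser N b = binser N (a + b) %[modX N].
Proof.
rewrite -comp_polyM -take_poly_comp // -[RHS]take_poly_comp //.
congr (take_poly _ (_ \Po _)); apply/polyP => j.
rewrite !coef_take_poly coef_poly; case: ltnP => // lt_jN.
rewrite coefM -gbinom_Vandermonde scaler_suml; apply: eq_bigr => i _ /=.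
have le_ij : (i <= j)%N by rewrite -ltnS.
rewrite !coef_poly (leq_ltn_trans le_ij lt_jN) (leq_ltn_trans (leq_subr i j) lt_jN).
by rewrite mulr_algl scalerA.
Qed.

Lemma deriv_binpoly N c : (binpoly N.+1 c)^`() = c%:A *: binpoly N (c - 1).
Proof.
apply/polyP => j; rewrite coef_deriv coefZ !coef_poly ltnS.
case: ltnP => _; last by rewrite mul0rn mulr0.
by rewrite scalerMnl -mulr_natr mul_gbinom_diag mulr_algl scalerA.
Qed.

Lemma binser_Euler N c :
  'X * (binser N c)^`() = (c%:A)%:P * ('X * u^`() * binser N (c - 1)) %[modX N].
Proof.
case: N => [|N]; first by rewrite !take_poly0l.
rewrite /binser deriv_comp deriv_binpoly comp_polyZ -mul_polyC mulrAC.
rewrite -!mulrA [in RHS]mulrCA !take_polyXM; congr (_ * _).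
by do 2!apply: eqmodX_mul => //; rewrite (take_binser _ (leqnSn N)).
Qed.

Lemma coef_binser_Euler N c n : (n < N)%N ->
  c%:A * ('X * u^`() * binser N (c - 1))`_n = (binser N c)`_n *+ n.
Proof.
move=> lt_nN; have /(congr1 (coefp n)) := binser_Euler N c.
by rewrite /= !coef_take_poly lt_nN coefCM coefX_deriv.
Qed.

(* rho - t u'/(1 + u), with 1/(1 + u) = (1 + u)^(-1). *)
Definition psiser N (rho : rat) : {poly R} :=
  (rho%:A)%:P - 'X * u^`() * binser N (-1).

Lemma binser_psiser N rho c :
  binser N c * psiser N rho
    = (rho%:A)%:P * binser N c - 'X * u^`() * binser N (c - 1) %[modX N].
Proof.
rewrite /psiser mulrBr mulrC !linearB; congr (_ - _).
by rewrite mulrCA; apply: eqmodX_mul => //; apply: binserM.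
Qed.

Lemma coef_binser_psiser N (rho : rat) n : rho != 0 -> (n < N)%N ->
  (binser N (n%:R / rho) * psiser N rho)`_n = rho%:A *+ (n == 0)%N.
Proof.
move=> rho_neq0 lt_nN; rewrite (coef_eqmodX (binser_psiser _ _ _) lt_nN) coefB coefCM.
case: n lt_nN => [|n] lt_nN.
  by rewrite coef0_binser // -mulrA coefXM subr0 mulr_algl.
set c := n.+1%:R / rho; have c_neq0 : c != 0 by rewrite mulf_neq0 ?invr_eq0 ?pnatr_eq0.
apply: (scalerI c_neq0); rewrite mulr0n scaler0 scalerBr.
rewrite -[c *: ('X * _ * _)`__]mulr_algl coef_binser_Euler //.
by rewrite scalerAl scalerA divfK // scaler_nat mulr_natl subrr.
Qed.

Lemma binser_Euler_psiser N (rho : rat) b :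
  ((rho * b)%:A)%:P * binser N b - 'X * (binser N b)^`()
    = (b%:A)%:P * (binser N b * psiser N rho) %[modX N].
Proof.
rewrite (eqmodX_mul (erefl (take_poly N (b%:A)%:P)) (binser_psiser _ _ _)).
rewrite mulrBr !linearB /= binser_Euler; congr (take_poly _ _ - _).
by rewrite mulrA -polyCM mulr_algl scalerA [b * rho]mulrC.
Qed.

Lemma coef_binser_psiser_binser N (rho : rat) a b n : rho != 0 -> (n < N)%N ->
  a + b = n%:R / rho ->
  (binser N a * psiser N rho * binser N b)`_n = rho%:A *+ (n == 0)%N.
Proof.
move=> rho_neq0 lt_nN ab; rewrite -(coef_binser_psiser rho_neq0 lt_nN) -ab.
apply: coef_eqmodX lt_nN; rewrite mulrAC.
by apply: eqmodX_mul => //; apply: binserM.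
Qed.

Lemma coef_binser_mul_Euler N (rho : rat) a b n : rho != 0 -> (n < N)%N ->
  a + b = n%:R / rho ->
  (binser N a * (((rho * b)%:A)%:P * binser N b - 'X * (binser N b)^`()))`_n
    = (rho * b)%:A *+ (n == 0)%N.
Proof.
move=> rho_neq0 lt_nN ab.
have -> : (rho * b)%:A *+ (n == 0)%N = b%:A * (rho%:A *+ (n == 0)%N) :> R.
  by rewrite mulrnAr mulr_algl scalerA mulrC.
rewrite -(coef_binser_psiser rho_neq0 lt_nN) -ab -coefCM.
apply: coef_eqmodX lt_nN; rewrite (eqmodX_mul (erefl _) (binser_Euler_psiser _ _ _)).
rewrite mulrCA; apply: eqmodX_mul => //; rewrite mulrA.
by apply: eqmodX_mul => //; apply: binserM.
Qed.

End BinomialSeries.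

Section Toeplitz.
Variables (R : nzRingType) (m : nat).
Implicit Types p q : {poly R}.

Definition toepmx p : 'M[R]_m := \matrix_(i, j) if (j <= i)%N then p`_(i - j) else 0.

Lemma toepmxM p q : toepmx p *m toepmx q = toepmx (p * q).
Proof.
apply/matrixP => i k; rewrite !mxE.
pose F j := (if (j <= i)%N then p`_(i - j) else 0)
            * (if (k <= j)%N then q`_(j - k) else 0).
transitivity (\sum_(0 <= j < m) F j).
  by rewrite big_mkord; apply: eq_bigr => j _; rewrite !mxE.
have [le_ki | lt_ik] := leqP k i; last first.
  rewrite big1 // => j _; rewrite /F; case: leqP => [le_ji|]; last by rewrite mul0r.
  by rewrite leqNgt (leq_ltn_trans le_ji lt_ik) mulr0.
have lt_im := ltn_ord i.
rewrite (big_cat_nat (n := k)) //; last exact: leq_trans le_ki (ltnW lt_im).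
rewrite (big_cat_nat (n := i.+1) (m := k)) //=; last exact: leqW.
rewrite big1_seq ?add0r => [|j]; last first.
  by rewrite mem_index_iota /F => /andP[_ /andP[_ lt_jk]]; rewrite (leqNgt k j) lt_jk mulr0.
rewrite [X in _ + X]big1_seq ?addr0 => [|j]; last first.
  by rewrite mem_index_iota /F => /andP[_ /andP[lt_ij _]]; rewrite (leqNgt j i) lt_ij mul0r.
rewrite -{1}[nat_of_ord k]add0n big_addn coefMr subSn // big_mkord; apply: eq_bigr => j _.
have le_jk_i : (j + k <= i)%N by have := ltn_ord j; lia.
by rewrite /F le_jk_i leq_addl addnK subnDA subnAC.
Qed.

Lemma col_diag_mul_toepmx (e : R) p k :
  col k (diag_mx (\row_j (e - j%:R)) *m toepmx p)
    = col k (toepmx ((e - k%:R)%:P * p - 'X * p^`())).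
Proof.
apply/colP => j; rewrite mul_diag_mx !mxE; case: leqP => le_kj; last by rewrite mulr0.
rewrite coefB coefCM coefX_deriv -[_ *+ (j - k)]mulr_natl -mulrBl natrB //.
by rewrite opprB addrA subrK.
Qed.

End Toeplitz.

Lemma mulmx_row_col_eq (R : nzRingType) m n p (A A' : 'M[R]_(m, n))
    (B B' : 'M[R]_(n, p)) i k :
  row i A = row i A' -> col k B = col k B' -> (A *m B) i k = (A' *m B') i k.
Proof.
move=> rowA colB; rewrite !mxE; apply: eq_bigr => j _.
have := congr1 (fun M : 'M_(1, n) => M 0 j) rowA.
have := congr1 (fun M : 'M_(n, 1) => M j 0) colB.
by rewrite !mxE => -> ->.
Qed.

Section MatrixIdentities.
Variables (r m : nat).
Hypothesis r_gt0 : (0 < r)%N.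

Local Notation u := (phi r - 1).

Lemma coef0_phi_sub1 : u`_0 = 0.
Proof.
rewrite /phi addrAC subrr add0r coef_sum big1 // => i _.
by rewrite coefCM coefXn mulr0.
Qed.

Lemma beta_binser c N j : (j < N)%N -> beta r c j = (binser u N c)`_j.
Proof.
move=> lt_jN; rewrite coef_binser ?coef0_phi_sub1 //=.
by under eq_bigr do rewrite -alg_mpolyC.
Qed.

Lemma beta_neg c (i j : nat) : (i < j)%N -> beta r c (i%:Z - j%:Z) = 0.
Proof.
move=> lt_ij; have : i%:Z - j%:Z < 0 by rewrite subr_lt0 ltz_nat.
by case: (i%:Z - j%:Z) => // n; rewrite ltz_nat.
Qed.

Lemma psi_coef_psiser N j : (j < N)%N -> psi_coef r j = (psiser u N r%:R)`_j.
Proof.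
move=> lt_jN; rewrite /psi_coef /psiser coefB coefC coefM scaler_nat mulrb.
rewrite derivB derivC subr0; congr (_ - _); apply: eq_bigr => i _.
by rewrite (beta_binser _ (leq_ltn_trans (leq_subr i j) lt_jN)).
Qed.

Lemma Smat_psi_coef : @Smat r m (psi_coef r) = toepmx m (psiser u m r%:R).
Proof.
apply/matrixP => i j; rewrite !mxE; case: leqP => // _.
by rewrite (psi_coef_psiser (leq_ltn_trans (leq_subr _ _) (ltn_ord i))).
Qed.

Lemma row_Pmat lam i : row i (Pmat r lam) = row i (toepmx m (binser u m (lam i))).
Proof.
apply/rowP => j; rewrite !mxE; case: leqP => [le_ji | lt_ij]; last exact: beta_neg.
by rewrite subzn // (beta_binser _ (leq_ltn_trans (leq_subr _ _) (ltn_ord i))).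
Qed.

Lemma col_Qmat mu k : col k (Qmat r mu) = col k (toepmx m (binser u m (mu k))).
Proof.
apply/colP => j; rewrite !mxE; case: leqP => [le_kj | lt_jk]; last exact: beta_neg.
by rewrite subzn // (beta_binser _ (leq_ltn_trans (leq_subr _ _) (ltn_ord j))).
Qed.

Lemma eq_ord_subn0 (i k : 'I_m) : (k <= i)%N -> ((i - k)%N == 0%N) = (i == k).
Proof. by move=> le_ki; rewrite subn_eq0 -(inj_eq val_inj) eqn_leq le_ki andbT. Qed.

Variables (e : rat) (mu : 'I_m -> rat).
Hypothesis muE : forall k, mu k = (e - k%:R) / r%:R.

Let r_neq0 : (r%:R : rat) != 0.
Proof. by rewrite pnatr_eq0 -lt0n. Qed.

Let mu_sub (i k : 'I_m) : (k <= i)%N -> - mu i + mu k = (i - k)%N%:R / r%:R.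
Proof. by move=> le_ki; rewrite !muE natrB //; field. Qed.

Let r_mu k : (r%:R * mu k)%:A = (e - k%:R)%:MP :> {mpoly rat[r]}.
Proof. by rewrite muE mulrC divfK // alg_mpolyC. Qed.

Lemma Pmat_Smat_Qmat :
  Pmat r (fun i => - mu i) *m @Smat r m (psi_coef r) *m Qmat r mu = (r%:R)%:M.
Proof.
apply/matrixP => i k.
have rowPS : row i (Pmat r (fun i => - mu i) *m @Smat r m (psi_coef r))
    = row i (toepmx m (binser u m (- mu i)) *m @Smat r m (psi_coef r)).
  by rewrite !row_mul row_Pmat.
rewrite (mulmx_row_col_eq rowPS (col_Qmat mu k)) Smat_psi_coef !toepmxM !mxE.
case: leqP => [le_ki | lt_ik]; last first.
  by rewrite -(inj_eq val_inj) /= ltn_eqF.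
have lt_ik_m : (i - k < m)%N := leq_ltn_trans (leq_subr _ _) (ltn_ord i).
rewrite (coef_binser_psiser_binser coef0_phi_sub1 r_neq0 lt_ik_m (mu_sub le_ki)).
by rewrite scaler_nat eq_ord_subn0.
Qed.

Lemma col_diag_mul_Qmat k :
  col k (diag_mx (\row_j (e - j%:R)%:MP) *m Qmat r mu)
    = col k (toepmx m (((r%:R * mu k)%:A)%:P * binser u m (mu k)
                       - 'X * (binser u m (mu k))^`())).
Proof.
rewrite colE -mulmxA -colE col_Qmat colE mulmxA -colE.
have -> : diag_mx (\row_j (e - j%:R)%:MP)
    = diag_mx (\row_j (e%:MP - j%:R)) :> 'M[{mpoly rat[r]}]_m.
  by congr diag_mx; apply/rowP => j; rewrite !mxE rmorphB /= mpolyC_nat.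
by rewrite r_mu rmorphB /= mpolyC_nat col_diag_mul_toepmx.
Qed.

Lemma Pmat_diag_Qmat :
  Pmat r (fun i => - mu i) *m diag_mx (\row_j (e - j%:R)%:MP) *m Qmat r mu
    = diag_mx (\row_j (e - j%:R)%:MP).
Proof.
apply/matrixP => i k; rewrite -mulmxA.
rewrite (mulmx_row_col_eq (row_Pmat _ i) (col_diag_mul_Qmat k)) toepmxM !mxE.
case: leqP => [le_ki | lt_ik]; last first.
  by rewrite -(inj_eq val_inj) /= ltn_eqF.
have lt_ik_m : (i - k < m)%N := leq_ltn_trans (leq_subr _ _) (ltn_ord i).
rewrite (coef_binser_mul_Euler coef0_phi_sub1 r_neq0 lt_ik_m (mu_sub le_ki)).
by rewrite eq_ord_subn0 //; case: eqVneq => [->|_]; rewrite ?r_mu ?mulr0n.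
Qed.

End MatrixIdentities.

Theorem lemma12 (r m : nat) (hr : (2 <= r)%N) (hm : (1 <= m)%N) :
  let lam := fun i : 'I_m => ((r%:Z - (i.+1)%:Z)%:~R / r%:R : rat) in
  let D := diag_mx (\row_(i < m) (((r%:Z - (i.+1)%:Z)%:~R : rat)%:MP : {mpoly rat[r]})) in
  (Pmat r (fun i => - lam i) *m @Smat r m (psi_coef r) *m Qmat r lam = (r%:R : {mpoly rat[r]})%:M)
  /\ (Pmat r (fun i => - lam i) *m D *m Qmat r lam = D).
Proof.
move=> lam D.
have r_gt0 : (0 < r)%N := ltnW hr.
have castE (j : nat) : ((r%:Z - j.+1%:Z)%:~R : rat) = r%:R - 1 - j%:R.
  by rewrite intrB -!pmulrn -natr1 opprD addrA addrAC.
have lamE k : lam k = (r%:R - 1 - k%:R) / r%:R by rewrite /lam castE.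
have -> : D = diag_mx (\row_j (r%:R - 1 - j%:R)%:MP).
  by congr diag_mx; apply/rowP => j; rewrite !mxE castE.
by split; [exact: (Pmat_Smat_Qmat r_gt0 lamE) | exact: (Pmat_diag_Qmat r_gt0 lamE)].
Qed.
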